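(* Let $H$ be a finite graph (possibly with loops), and let $c\geq 1$ and $t\geq 0$ be integers. If the exponential graph $\mathcal{E}_c(H)$ admits a proper coloring with $c+t$ colors, then $\mathcal{E}_c(H)$ has a suited $(c+t)$-coloring.
   Context: All graphs have no multiple edges but may have loops. For a finite graph $H$ and integer $c\ge 1$, two maps $\phi_1,\phi_2: V(H)\to[c]$ are co-proper if $\phi_1(u)\neq\phi_2(v)$ whenever $u\sim v$ in $H$ (for a loop at $u$ this includes the pair $u=v$). The exponential graph $\mathcal{E}_c(H)$ has vertex set $[c]^{V(H)}$, two maps $\phi_1,\phi_2$ being adjacent iff they are co-proper (a map co-proper with itself has a loop). A proper $(c+t)$-coloring $\Psi: V(\mathcal{E}_c(H))\to[c+t]$ assigns distinct colors to adjacent maps (so no proper coloring exists if there is a loop). The colors $1,\dots,c$ are called primary and $c+1,\dots,c+t$ secondary. A proper $(c+t)$-coloring $\Psi$ of $\mathcal{E}_c(H)$ is suited if for every $\phi\in V(\mathcal{E}_c(H))$, $\Psi(\phi)\in \operatorname{im}(\phi)\cup\{c+1,\dots,c+t\}$. *)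

From mathcomp Require Import all_boot.
Set Implicit Arguments. Unset Strict Implicit. Unset Printing Implicit Defensive.

(* H: finite graph on vertex type V with symmetric adjacency relation adj
   (loops allowed: adj u u may hold).  Colours [c] = {1..c} are encoded as 'I_c
   (colour i+1 <-> ordinal i); colours [c+t] as 'I_(c+t), with ordinals < c
   primary and ordinals >= c secondary. *)

Definition expmap (V : finType) (c : nat) := {ffun V -> 'I_c}.

Definition coproper (V : finType) (adj : rel V) (c : nat)
  (phi1 phi2 : expmap V c) : Prop :=
  forall u v : V, adj u v -> phi1 u <> phi2 v.

Definition proper_coloring (V : finType) (adj : rel V) (c t : nat)
  (Psi : expmap V c -> 'I_(c + t)) : Prop :=
  forall phi1 phi2 : expmap V c, coproper adj phi1 phi2 -> Psi phi1 <> Psi phi2.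

Definition suited (V : finType) (c t : nat)
  (Psi : expmap V c -> 'I_(c + t)) : Prop :=
  forall phi : expmap V c,
    c <= nat_of_ord (Psi phi) \/ exists v : V, nat_of_ord (phi v) = nat_of_ord (Psi phi).

(* A proper colouring gives distinct colours to the constant maps, since any
   two distinct constant maps are co-proper.  Permuting the colours, the
   constant map with value i may therefore be assumed to get the primary
   colour i.  If a map phi then got a primary colour i outside its image, phi
   would be co-proper with the constant map i, which has the same colour. *)
From mathcomp Require Import all_boot fingroup perm.
Set Implicit Arguments. Unset Strict Implicit. Unset Printing Implicit Defensive.

Lemma perm_extend_inj_in (I : eqType) (T : finType) (f g : I -> T) (r : seq I) :
  uniq r -> {in r &, injective f} -> {in r &, injective g} ->
  exists s : {perm T}, {in r, forall i, s (f i) = g i}.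
Proof.
elim: r => [|i r IHr] /=; first by exists 1%g.
move=> /andP[i_r uniq_r] inj_f inj_g.
have sub_r : {subset r <= i :: r} by move=> j; rewrite inE orbC => ->.
have [s s_fg] := IHr uniq_r (sub_in2 sub_r inj_f) (sub_in2 sub_r inj_g).
exists (s * tperm (s (f i)) (g i))%g => j; rewrite inE permM.
case/predU1P => [-> | j_r]; first by rewrite tpermL.
have j_neq_i : j != i by apply: contraNneq i_r => <-.
have j_ir : j \in i :: r by rewrite inE j_r orbT.
have i_ir := mem_head i r.
rewrite (s_fg j j_r) tpermD //.
  rewrite -(s_fg j j_r) (inj_eq perm_inj).
  by apply: contraNneq j_neq_i => /(inj_f _ _ i_ir j_ir) ->.
by apply: contraNneq j_neq_i => /(inj_g _ _ i_ir j_ir) ->.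
Qed.

Lemma perm_extend_inj (I T : finType) (f g : I -> T) :
  injective f -> injective g -> exists s : {perm T}, forall i, s (f i) = g i.
Proof.
move=> inj_f inj_g.
have [s s_fg] := perm_extend_inj_in (enum_uniq I) (in2W inj_f) (in2W inj_g).
by exists s => i; rewrite s_fg ?mem_enum.
Qed.

Section ExponentialGraphColorings.
Variables (V : finType) (adj : rel V) (c t : nat).

Definition const_map (i : 'I_c) : expmap V c := [ffun=> i].

Lemma coproper_const_map (i : 'I_c) (phi : expmap V c) :
  (forall v, phi v != i) -> coproper adj (const_map i) phi.
Proof. by move=> phi_i u v _; rewrite ffunE => /esym/eqP; apply/negP. Qed.

Lemma proper_coloring_const_inj (Psi : expmap V c -> 'I_(c + t)) :
  proper_coloring adj Psi -> injective (Psi \o const_map).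
Proof.
move=> Psi_proper i j /= Psi_ij; apply/eqP/negPn/negP => i_neq_j.
by apply: Psi_proper Psi_ij; apply: coproper_const_map => v; rewrite ffunE eq_sym.
Qed.

Lemma proper_coloring_perm (Psi : expmap V c -> 'I_(c + t)) (s : {perm 'I_(c + t)}) :
  proper_coloring adj Psi -> proper_coloring adj (s \o Psi).
Proof. by move=> Psi_proper phi1 phi2 co /perm_inj; apply: Psi_proper. Qed.

Lemma suited_const_map (Psi : expmap V c -> 'I_(c + t)) :
  proper_coloring adj Psi -> (forall i, Psi (const_map i) = lshift t i) ->
  suited Psi.
Proof.
move=> Psi_proper Psi_const phi.
have [|Psi_lt] := leqP c (Psi phi); [by left | right].
pose i := Ordinal Psi_lt.
have [/existsP[v /eqP phi_v] | /existsPn phi_i] := boolP [exists v, phi v == i].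
  by exists v; rewrite phi_v.
exfalso; apply: (Psi_proper (const_map i) phi (coproper_const_map phi_i)).
by apply: val_inj; rewrite Psi_const.
Qed.

End ExponentialGraphColorings.

Theorem lemma3 (V : finType) (adj : rel V) (adj_sym : symmetric adj) (c t : nat)
  (hc : 1 <= c) :
  (exists Psi : expmap V c -> 'I_(c + t), proper_coloring adj Psi) ->
  exists Psi : expmap V c -> 'I_(c + t), proper_coloring adj Psi /\ suited Psi.
Proof.
move=> [Psi Psi_proper].
have [s s_const] :=
  perm_extend_inj (proper_coloring_const_inj Psi_proper) (@lshift_inj c t).
have sPsi_proper := proper_coloring_perm (s := s) Psi_proper.
by exists (s \o Psi); split; last exact: suited_const_map sPsi_proper s_const.
Qed.
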